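(* Let $q$ be a prime power, $m \ge 2$ an integer, $g = \gcd(q-1, m(m-1))$, and $\lambda$ a partition of $m$ such that $S_{\lambda,\mathbb{F}_q}$ is nonempty. If $\delta_1, \delta_2 \in D_{\lambda,\mathbb{F}_q}$ and $\delta_2/\delta_1$ is a $g$th power in $\mathbb{F}_q^\times$, then the number of polynomials in $S_{\lambda,\mathbb{F}_q}$ with discriminant $\delta_1$ equals the number of polynomials in $S_{\lambda,\mathbb{F}_q}$ with discriminant $\delta_2$.
   Context: For a partition $\lambda = (\lambda_1,\dots,\lambda_k)$ of $m$ (positive integers summing to $m$), a monic $f \in \mathbb{F}_q[x]$ of degree $m$ has factorization type $\lambda$ if $f = \pi_1\cdots\pi_k$ with the $\pi_i$ distinct monic irreducible polynomials and $\deg \pi_i = \lambda_i$. $S_{\lambda,\mathbb{F}_q}$ is the set of monic squarefree polynomials in $\mathbb{F}_q[x]$ of factorization type $\lambda$, and $D_{\lambda,\mathbb{F}_q} = \{\operatorname{disc}(f) : f \in S_{\lambda,\mathbb{F}_q}\}$. For $f$ of degree $m\ge 2$ with leading coefficient $a_m$ and roots $\alpha_i$ in a splitting field, $\operatorname{disc}(f) = a_m^{2m-2}\prod_{i<j}(\alpha_i-\alpha_j)^2$. *)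

From HB Require Import structures.
From mathcomp Require Import all_boot all_order all_algebra all_field.
From Stdlib Require Import ClassicalEpsilon.
Set Implicit Arguments. Unset Strict Implicit. Unset Printing Implicit Defensive.
Import GRing.Theory.
Local Open Scope ring_scope.

(* Classical boolean reflection of a proposition (used to count elements of
   finite sets defined by non-decidable-by-construction predicates). *)
Definition asb (P : Prop) : bool :=
  if excluded_middle_informative P then true else false.

Definition is_partition (m : nat) (lam : seq nat) : Prop :=
  all (fun k => 0 < k)%N lam /\ sumn lam = m.

Definition has_fact_type (F : fieldType) (lam : seq nat) (f : {poly F}) : Prop :=
  f \is monic /\
  exists ps : seq {poly F},
    [/\ uniq ps,
        (forall p, p \in ps -> p \is monic /\ irreducible_poly p),
        f = \prod_(p <- ps) p
      & perm_eq [seq (size p).-1 | p : {poly F} <- ps] lam].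

(* S_{lam,F}: monic squarefree polynomials of factorization type lam. *)
Definition in_S (F : fieldType) (lam : seq nat) (f : {poly F}) : Prop :=
  has_fact_type lam f.

Definition is_disc (F : fieldType) (f : {poly F}) (d : F) : Prop :=
  exists (L : fieldExtType F) (rs : seq L),
    map_poly (in_alg L) f = (lead_coef f)%:A%:P * \prod_(r <- rs) ('X - r%:P)
    /\ d%:A = (lead_coef f)%:A ^+ (2 * (size f).-1 - 2)
              * \prod_(i < size rs) \prod_(j < size rs | (i < j)%N)
                    (rs`_i - rs`_j) ^+ 2.

Definition in_D (F : fieldType) (lam : seq nat) (d : F) : Prop :=
  exists f, in_S lam f /\ is_disc f d.

Definition monic_of (F : fieldType) (m : nat) (t : m.-tuple F) : {poly F} :=
  'X^m + \poly_(i < m) t`_i.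

(* number of f in S_{lam,F} (necessarily monic of degree m) with disc(f) = d,
   counted via the bijection between m-tuples and monic degree-m polynomials *)
Definition count_S_disc (F : finFieldType) (m : nat) (lam : seq nat) (d : F) : nat :=
  #|[set t : m.-tuple F | asb (in_S lam (monic_of t) /\ is_disc (monic_of t) d)]|.

From HB Require Import structures.
From mathcomp Require Import all_boot all_order all_algebra all_field.
From Stdlib Require Import ClassicalEpsilon.
Set Implicit Arguments. Unset Strict Implicit. Unset Printing Implicit Defensive.
Import GRing.Theory.
Local Open Scope ring_scope.

(* The dilation f(x) |-> c^m f(x/c) of a polynomial of degree m multiplies its
   roots by c. It is multiplicative and invertible, so it permutes the monic
   polynomials of a given factorization type, and it multiplies the
   discriminant by c^(m(m-1)). As x^(q-1) = 1 on F_q^*, a Bezout relation for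
   g = gcd(q-1, m(m-1)) writes every g-th power x^g as some c^(m(m-1)), and
   dilation by c then matches the polynomials of S_lam with discriminant d
   bijectively with those of discriminant d x^g. *)

Definition dilate (F : fieldType) (c : F) (p : {poly F}) : {poly F} :=
  c ^+ (size p).-1 *: (p \Po (c^-1 *: 'X)).

Section Dilate.
Variable F : fieldType.
Implicit Types (c : F) (p q : {poly F}).

Lemma size_scaleX c : c != 0 -> size (c *: 'X : {poly F}) = 2%N.
Proof. by move=> c0; rewrite size_scale // size_polyX. Qed.

Lemma size_dilate c p : c != 0 -> size (dilate c p) = size p.
Proof.
move=> c0; rewrite size_scale ?expf_neq0 //.
by rewrite size_comp_poly2 // size_scaleX // invr_eq0.
Qed.

Lemma lead_coef_dilate c p : c != 0 -> lead_coef (dilate c p) = lead_coef p.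
Proof.
move=> c0; rewrite lead_coefZ lead_coef_comp ?size_scaleX ?invr_eq0 //.
by rewrite lead_coefZ lead_coefX mulr1 mulrCA -exprMn mulfV // expr1n mulr1.
Qed.

Lemma dilateK c : c != 0 -> cancel (dilate c) (dilate c^-1).
Proof.
move=> c0 p; rewrite {1}/dilate size_dilate // /dilate comp_polyZ scalerA.
rewrite -exprMn mulVf // expr1n scale1r -comp_polyA comp_polyZ comp_polyX.
by rewrite scalerA invrK mulVf // scale1r comp_polyXr.
Qed.

Lemma dilate_inj c : c != 0 -> injective (dilate c).
Proof. by move/dilateK/can_inj. Qed.

Lemma dilate1 c : dilate c 1 = 1.
Proof. by rewrite /dilate size_poly1 expr0 scale1r -polyC1 comp_polyC. Qed.

Lemma dilateM c p q : c != 0 -> dilate c (p * q) = dilate c p * dilate c q.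
Proof.
move=> c0; have [->|p0] := eqVneq p 0.
  by rewrite mul0r /dilate comp_poly0 !scaler0 mul0r.
have [->|q0] := eqVneq q 0; first by rewrite mulr0 /dilate comp_poly0 !scaler0 mulr0.
rewrite /dilate size_mul // comp_polyM -scalerAl -scalerAr scalerA -exprD.
congr (_ ^+ _ *: _).
have := size_poly_gt0 p; have := size_poly_gt0 q; rewrite p0 q0.
by case: (size p) => [|a] //; case: (size q) => [|b] //= _ _; rewrite addnS.
Qed.

Lemma dilateZ c (a : F) p : dilate c (a *: p) = a *: dilate c p.
Proof.
have [->|a0] := eqVneq a 0; first by rewrite !scale0r /dilate comp_poly0 scaler0.
by rewrite /dilate size_scale // comp_polyZ !scalerA mulrC.
Qed.

Lemma dilate_monic c p : c != 0 -> (dilate c p \is monic) = (p \is monic).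
Proof. by move=> c0; rewrite !monicE lead_coef_dilate. Qed.

Lemma dvdp_dilate c p q : c != 0 -> (dilate c p %| dilate c q) = (p %| q).
Proof.
move=> c0; apply/idP/idP => [|/dvdpP [r ->]]; last by rewrite dilateM ?dvdp_mull.
have c0' : c^-1 != 0 by rewrite invr_eq0.
move=> /dvdpP [r]; rewrite -[r](dilateK c0') invrK -dilateM //.
by move=> /(dilate_inj c0) ->; rewrite dvdp_mull.
Qed.

Lemma dilate_irreducible c p : c != 0 ->
  irreducible_poly p -> irreducible_poly (dilate c p).
Proof.
move=> c0 [sp irr_p]; split=> [|q sq dvd_q]; first by rewrite size_dilate.
have c0' : c^-1 != 0 by rewrite invr_eq0.
rewrite -(dilateK c0' q) invrK /eqp !dvdp_dilate //.
rewrite -(dvdp_dilate _ _ c0') dilateK // in dvd_q.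
by apply: irr_p; rewrite ?size_dilate.
Qed.

Lemma dilate_prod_XsubC c (rs : seq F) : c != 0 ->
  dilate c (\prod_(r <- rs) ('X - r%:P)) = \prod_(r <- rs) ('X - (c * r)%:P).
Proof.
move=> c0; rewrite /dilate size_prod_XsubC /=.
elim: rs => [|r rs IH]; first by rewrite !big_nil expr0 scale1r -polyC1 comp_polyC.
rewrite !big_cons comp_polyM /= exprS -scalerA scalerAr IH scalerAl.
rewrite comp_polyB comp_polyX comp_polyC scalerBr scalerA mulfV //.
by rewrite scale1r scale_polyC.
Qed.

End Dilate.

Lemma map_dilate (F K : fieldType) (f : {rmorphism F -> K}) (c : F) p :
  map_poly f (dilate c p) = dilate (f c) (map_poly f p).
Proof.
rewrite /dilate map_polyZ map_comp_poly map_polyZ map_polyX size_map_poly.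
by rewrite rmorphXn fmorphV.
Qed.

Lemma has_fact_type_dilate (F : fieldType) (c : F) lam f : c != 0 ->
  has_fact_type lam f -> has_fact_type lam (dilate c f).
Proof.
move=> c0 [mf [ps [uniq_ps irr_ps f_eq perm_ps]]].
split; first by rewrite dilate_monic.
exists (map (dilate c) ps); split.
- by rewrite map_inj_uniq //; exact: dilate_inj.
- move=> _ /mapP [p /irr_ps [mp ip] ->].
  by rewrite dilate_monic //; split=> //; exact: dilate_irreducible.
- by rewrite f_eq big_map (big_morph _ (fun p q => dilateM p q c0) (dilate1 c)).
- rewrite -map_comp (eq_map (g := fun p : {poly F} => (size p).-1)) // => p /=.
  by rewrite size_dilate.
Qed.

Lemma prod_ltn_pairs_const (R : comPzSemiRingType) (a : R) n :
  \prod_(i < n) \prod_(j < n | (i < j)%N) a = a ^+ 'C(n, 2).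
Proof.
elim: n => [|n IH]; first by rewrite big_ord0.
rewrite big_ord_recr /= [X in _ * X]big1 => [|j]; last by rewrite ltnNge -ltnS ltn_ord.
under eq_bigr do rewrite big_mkcond big_ord_recr /= ltn_ord -big_mkcond.
by rewrite mulr1 big_split /= IH prodr_const card_ord -exprD binS bin1.
Qed.

Lemma mul2_bin2 n : (2 * 'C(n, 2) = n * n.-1)%N.
Proof.
by rewrite mulnC bin2 -divn2 divnK // dvdn2 oddM; case: n => //= n; rewrite andNb.
Qed.

Lemma is_disc_dilate (F : fieldType) (c : F) f d : c != 0 -> f != 0 ->
  is_disc f d -> is_disc (dilate c f) (d * c ^+ ((size f).-1 * (size f).-2)).
Proof.
move=> c0 f0 [L [rs [f_split disc_f]]].
have cL0 : c%:A != 0 :> L by rewrite scaler_eq0 oner_eq0 orbF.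
have size_rs : size rs = (size f).-1.
  have lcL0 : (lead_coef f)%:A != 0 :> L.
    by rewrite scaler_eq0 oner_eq0 orbF lead_coef_eq0.
  by rewrite -(size_map_poly (in_alg L)) f_split size_Cmul // size_prod_XsubC.
exists L, [seq c%:A * r | r <- rs]; rewrite lead_coef_dilate // size_dilate //; split.
  by rewrite map_dilate f_split !mul_polyC dilateZ dilate_prod_XsubC // big_map.
rewrite size_map; under eq_bigr => i _ do under eq_bigr => j _ do
  rewrite !(nth_map 0) // -mulrBr exprMn.
under eq_bigr do rewrite big_split /=.
rewrite big_split /= prod_ltn_pairs_const -exprM mul2_bin2 mulrCA -disc_f size_rs.
by rewrite [RHS]mulrC mulr_algl exprZn expr1n scalerA.
Qed.

Lemma expf_gcdn_is_nth_power (F : finFieldType) (x : F) n : x != 0 -> (0 < n)%N ->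
  exists2 c : F, c != 0 & c ^+ n = x ^+ gcdn (#|F| - 1) n.
Proof.
move=> x0 n_gt0; have [u v bezout _] := egcdnP (#|F| - 1) n_gt0.
have x_order : x ^+ (#|F| - 1) = 1.
  apply: (mulIf x0); rewrite mul1r -exprSr subn1 prednK ?expf_card //.
  exact: ltnW (card_finNzRing_gt1 F).
exists (x ^+ u); first by rewrite expf_neq0.
by rewrite -exprM bezout exprD mulnC exprM x_order expr1n mul1r gcdnC.
Qed.

Section MonicOf.
Variables (F : fieldType) (m : nat).
Implicit Type t : m.-tuple F.

Lemma coef_monic_of t i :
  (monic_of t)`_i = if i == m then 1 else if (i < m)%N then t`_i else 0.
Proof.
rewrite coefD coefXn coef_poly.
by case: eqP => [->|_]; rewrite ?ltnn ?addr0 ?add0r.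
Qed.

Lemma size_monic_of t : size (monic_of t) = m.+1.
Proof. by rewrite size_polyDl size_polyXn // (leq_ltn_trans (size_poly _ _)). Qed.

Lemma monic_of_monic t : monic_of t \is monic.
Proof. by rewrite monicE /lead_coef size_monic_of coef_monic_of eqxx. Qed.

Lemma monic_of_inj : injective (@monic_of F m).
Proof.
move=> t1 t2 eq_t; apply: eq_from_tnth => i.
have := congr1 (fun p : {poly F} => p`_i) eq_t.
by rewrite /= !coef_monic_of ltn_eqF // ltn_ord -!tnth_nth.
Qed.

Lemma monic_of_coefs (p : {poly F}) : p \is monic -> size p = m.+1 ->
  monic_of [tuple p`_i | i < m] = p.
Proof.
move=> /monicP lead_p size_p; apply/polyP => i; rewrite coef_monic_of.
case: eqP => [->|/eqP ne_im]; first by rewrite -lead_p /lead_coef size_p.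
case: ltnP => [lt_im|ge_im].
  by rewrite -[i]/(nat_of_ord (Ordinal lt_im)) nth_mktuple.
by rewrite nth_default // size_p ltn_neqAle eq_sym ne_im.
Qed.

End MonicOf.

Lemma eq_asb (P Q : Prop) : (P <-> Q) -> asb P = asb Q.
Proof.
rewrite /asb => PQ.
case: excluded_middle_informative => p; case: excluded_middle_informative => q //.
all: exfalso; tauto.
Qed.

Lemma count_S_disc_dilate (F : finFieldType) m lam (d c : F) : c != 0 ->
  count_S_disc m lam (d * c ^+ (m * m.-1)) = count_S_disc m lam d.
Proof.
move=> c0; have c0' : c^-1 != 0 by rewrite invr_eq0.
pose T (t : m.-tuple F) := [tuple (dilate c (monic_of t))`_i | i < m].
have monic_of_T (t : m.-tuple F) : monic_of (T t) = dilate c (monic_of t).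
  by rewrite monic_of_coefs ?dilate_monic ?monic_of_monic ?size_dilate ?size_monic_of.
have T_inj : injective T.
  move=> t1 t2 /(congr1 (@monic_of F m)); rewrite !monic_of_T.
  by move=> /(dilate_inj c0) /monic_of_inj.
rewrite /count_S_disc -(card_preimset _ T_inj); apply: eq_card => t.
rewrite !inE monic_of_T; apply: eq_asb; have := size_monic_of t.
set f := monic_of t => size_f; have f0 : f != 0 by rewrite -size_poly_eq0 size_f.
have cf0 : dilate c f != 0 by rewrite -size_poly_eq0 size_dilate // size_f.
split=> -[S_f disc_f]; split.
- by rewrite -(dilateK c0 f); apply: has_fact_type_dilate.
- have := is_disc_dilate c0' cf0 disc_f; rewrite dilateK // size_dilate // size_f.
  by rewrite -mulrA -exprMn mulfV // expr1n mulr1.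
- exact: has_fact_type_dilate.
- by have := is_disc_dilate c0 f0 disc_f; rewrite size_f.
Qed.

Theorem lemma4p3 (F : finFieldType) (m : nat) (lam : seq nat) (d1 d2 : F) :
  (2 <= m)%N ->
  is_partition m lam ->
  (exists f : {poly F}, in_S lam f) ->
  in_D lam d1 -> in_D lam d2 ->
  (exists x : F, x != 0 /\ d2 / d1 = x ^+ (gcdn (#|F| - 1) (m * (m - 1)))) ->
  count_S_disc m lam d1 = count_S_disc m lam d2.
Proof.
move=> m_ge2 _ _ _ _ [x [x0 d_ratio]].
have d1_neq0 : d1 != 0.
  apply: contra_eq_neq d_ratio => ->; rewrite invr0 mulr0 eq_sym.
  by rewrite expf_eq0 (negbTE x0) andbF.
have pairs_gt0 : (0 < m * (m - 1))%N by rewrite muln_gt0 subn_gt0 (ltnW m_ge2).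
have [c c0 c_pow] := expf_gcdn_is_nth_power x0 pairs_gt0.
have -> : d2 = d1 * c ^+ (m * m.-1) by rewrite -subn1 c_pow -d_ratio mulrC divfK.
by rewrite count_S_disc_dilate.
Qed.
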